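(* Let $p\in(1,\infty)$ be such that $\gamma_{p,w}:=\gamma\, n^{1/p}(w_{\max}/w_{\min})^{1/p}<1$, let $Q^*_\lambda$ be the unique fixed point of $F_\lambda$, and let \[\bar\theta:=\arg\min_{\theta\in\mathbb{R}^d}\|Q_\theta-Q^*_\lambda\|_{p,w},\qquad \theta^*_p:=\arg\min_{\theta\in\mathbb{R}^d}f_p(\theta),\] where $f_p(\theta)=\frac1p\|F_\lambda(\Phi\theta)-\Phi\theta\|_{p,w}^p$. Then \[ \|Q_{\bar\theta}-Q_{\theta^*_p}\|_{p,w}\le\left(1+\frac{1+\gamma_{p,w}}{1-\gamma_{p,w}}\right)\min_{\theta\in\mathbb{R}^d}\|Q_\theta-Q^*_\lambda\|_{p,w}. \]
   Context: Finite discounted MDP with state space $\mathcal S$, action space $\mathcal A$, transition probabilities $P(s'\mid s,a)$, expected reward $R(s,a)$, discount $\gamma\in[0,1)$; $n=|\mathcal S||\mathcal A|$ and Q-functions are vectors in $\mathbb{R}^n$ indexed by $(s,a)$. For $\lambda>0$, $(F_\lambda Q)(s,a) := R(s,a)+\gamma\sum_{s'}P(s'\mid s,a)\,\lambda\ln\big(\sum_{u\in\mathcal A}\exp(Q(s',u)/\lambda)\big)$. Weights $w_i>0$ with $\sum_i w_i=1$, $\|x\|_{p,w}=(\sum_i w_i|x_i|^p)^{1/p}$, $w_{\min}=\min_i w_i$, $w_{\max}=\max_i w_i$. $\Phi\in\mathbb{R}^{n\times d}$ is a full-rank feature matrix and $Q_\theta=\Phi\theta$. When $\gamma_{p,w}<1$,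 $F_\lambda$ is a contraction in $\|\cdot\|_{p,w}$ with unique fixed point $Q^*_\lambda$. *)

From HB Require Import structures.
From mathcomp Require Import all_boot all_order all_algebra.
From mathcomp Require Import all_classical all_reals all_analysis.
Set Implicit Arguments. Unset Strict Implicit. Unset Printing Implicit Defensive.
Import Order.TTheory GRing.Theory Num.Theory.
Local Open Scope ring_scope.

Section MDP.
Variables (R : realType) (S A : finType).

Definition wpnorm (p : R) (w : S * A -> R) (x : S * A -> R) : R :=
  (\sum_i w i * (`|x i| `^ p)) `^ (p^-1).

Definition Fsoft (r : S -> A -> R) (P : S -> A -> S -> R) (gamma lambda : R)
    (Q : S * A -> R) : S * A -> R :=
  fun sa => r sa.1 sa.2 + gamma * \sum_(s' : S) P sa.1 sa.2 s' *
     (lambda * ln (\sum_(u : A) expR (Q (s', u) / lambda))).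

Definition Qlin (d : nat) (Phi : 'M[R]_(#|{: S * A}|, d)) (theta : 'cV[R]_d)
    : S * A -> R :=
  fun sa => (Phi *m theta) (enum_rank sa) 0.

Definition fp (r : S -> A -> R) (P : S -> A -> S -> R) (gamma lambda p : R)
    (w : S * A -> R) (d : nat) (Phi : 'M[R]_(#|{: S * A}|, d))
    (theta : 'cV[R]_d) : R :=
  p^-1 * (wpnorm p w (fun sa => Fsoft r P gamma lambda (Qlin Phi theta) sa
                                - Qlin Phi theta sa)) `^ p.

Definition gamma_pw (gamma p wmin wmax : R) : R :=
  gamma * (#|{: S * A}|%:R `^ (p^-1)) * ((wmax / wmin) `^ (p^-1)).

End MDP.

From HB Require Import structures.
From mathcomp Require Import all_boot all_order all_algebra.
From mathcomp Require Import all_classical all_reals all_analysis.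
From mathcomp Require Import ring lra.
Import Order.TTheory GRing.Theory Num.Theory.
Local Open Scope ring_scope.

(* Log-sum-exp is 1-Lipschitz for the sup norm, so [F_lambda] is a
   gamma-contraction in the sup norm; since the sup norm is at most
   [wmin^(-1/p)] times the weighted p-norm, which is at most the sup norm
   because the weights sum to 1, [F_lambda] is a [gamma_pw]-contraction for the
   weighted p-norm.  For a [g]-contraction with fixed point [Qstar] the
   residual controls the distance to [Qstar] from both sides:
   [(1 - g) d(Qstar, Q) <= d(F Q, Q) <= (1 + g) d(Q, Qstar)].  As [Q_thetap]
   minimises the residual, [d(Qstar, Q_thetap)] is at most
   [(1 + g) / (1 - g) * d(Q_thetabar, Qstar)], and the triangle inequality
   through [Qstar] concludes. *)

Section LogSumExp.
Variables (R : realType) (A : finType) (lambda : R).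
Hypothesis lambda_gt0 : 0 < lambda.

Lemma lse_le_shift (M : R) (f g : A -> R) : 0 <= M -> (forall u, f u <= g u + M) ->
  lambda * ln (\sum_u expR (f u / lambda))
  <= lambda * ln (\sum_u expR (g u / lambda)) + M.
Proof.
move=> M_ge0 fg.
have [u0 _|A0] := pickP (@predT A); last first.
  by rewrite !big_pred0 // ln0 // mulr0 add0r.
have sum_gt0 (h : A -> R) : 0 < \sum_u expR (h u / lambda).
  rewrite (bigD1 u0) //= ltr_pwDl ?expR_gt0 //.
  by apply: sumr_ge0 => u _; rewrite ltW // expR_gt0.
have sum_le : \sum_u expR (f u / lambda)
              <= expR (M / lambda) * \sum_u expR (g u / lambda).
  rewrite mulr_sumr; apply: ler_sum => u _.
  by rewrite -expRD ler_expR -mulrDl ler_pM2r ?invr_gt0 // addrC.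
rewrite -ler_ln ?posrE ?mulr_gt0 ?expR_gt0 // lnM ?posrE ?expR_gt0 // expRK
  in sum_le.
have -> : M = lambda * (M / lambda) by rewrite mulrCA mulfV ?mulr1 // lt0r_neq0.
by rewrite -mulrDr ler_pM2l // addrC.
Qed.

End LogSumExp.

Section SoftBellman.
Variables (R : realType) (S A : finType) (r : S -> A -> R) (P : S -> A -> S -> R).
Variables (gamma lambda : R).
Hypothesis P_ge0 : forall s a s', 0 <= P s a s'.
Hypothesis P_sum1 : forall s a, \sum_(s' : S) P s a s' = 1.
Hypothesis gamma_ge0 : 0 <= gamma.
Hypothesis lambda_gt0 : 0 < lambda.

Lemma Fsoft_lipschitz (M : R) (Q Q' : S * A -> R) :
  (forall i, `|Q i - Q' i| <= M) ->
  forall sa, `|Fsoft r P gamma lambda Q sa - Fsoft r P gamma lambda Q' sa|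
             <= gamma * M.
Proof.
move=> QQ' sa; have M_ge0 : 0 <= M by apply: le_trans (QQ' sa).
rewrite /Fsoft opprD addrACA subrr add0r -mulrBr normrM ger0_norm //.
rewrite ler_wpM2l // -sumrB (le_trans (ler_norm_sum _ _ _)) //.
rewrite -[M]mul1r -(P_sum1 sa.1 sa.2) mulr_suml; apply: ler_sum => s' _.
rewrite -mulrBr normrM ger0_norm // ler_wpM2l // ler_distl.
have dist_le (f g : S * A -> R) : (forall i, `|f i - g i| <= M) ->
    lambda * ln (\sum_u expR (f (s', u) / lambda))
    <= lambda * ln (\sum_u expR (g (s', u) / lambda)) + M.
  move=> fg; apply: lse_le_shift => // u.
  by have := fg (s', u); rewrite ler_distl => /andP[].
by rewrite lerBlDr !dist_le // => i; rewrite distrC.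
Qed.

End SoftBellman.

Lemma powR_convex_comb (R : realType) (p t u v : R) :
  1 <= p -> 0 <= t <= 1 -> 0 <= u -> 0 <= v ->
  (t * u + (1 - t) * v) `^ p <= t * u `^ p + (1 - t) * v `^ p.
Proof.
move=> p_ge1 /andP[t_ge0 t_le1] u_ge0 v_ge0.
have := @convex_powR R p p_ge1 (Itv01 t_ge0 t_le1) u v.
by rewrite !inE /= !in_itv /= !andbT !convRE; apply.
Qed.

Section WeightedNorm.
Variables (R : realType) (S A : finType) (p : R) (w : S * A -> R).
Hypothesis p_gt1 : 1 < p.
Hypothesis w_gt0 : forall i, 0 < w i.

Let p_gt0 : 0 < p. Proof. exact: lt_trans p_gt1. Qed.
Let invp_ge0 : 0 <= p^-1. Proof. by rewrite invr_ge0 ltW. Qed.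
Let w_ge0 i : 0 <= w i. Proof. exact: ltW. Qed.

Let powRK (c : R) : 0 <= c -> (c `^ p) `^ p^-1 = c.
Proof. by move=> c_ge0; rewrite -powRrM mulfV ?gt_eqF // powRr1. Qed.

Let powRVK (c : R) : 0 <= c -> (c `^ p^-1) `^ p = c.
Proof. by move=> c_ge0; rewrite -powRrM mulVf ?gt_eqF // powRr1. Qed.

Let wpsum_ge0 (x : S * A -> R) : 0 <= \sum_i w i * `|x i| `^ p.
Proof. by apply: sumr_ge0 => i _; rewrite mulr_ge0 ?powR_ge0. Qed.

Lemma wpnorm_ge0 x : 0 <= wpnorm p w x.
Proof. exact: powR_ge0. Qed.

Lemma powR_wpnorm x : wpnorm p w x `^ p = \sum_i w i * `|x i| `^ p.
Proof. exact/powRVK/wpsum_ge0. Qed.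

Lemma wpnorm_le x (c : R) : 0 <= c -> \sum_i w i * `|x i| `^ p <= c `^ p ->
  wpnorm p w x <= c.
Proof.
by move=> c_ge0 le_c; rewrite -[c]powRK // /wpnorm ge0_ler_powR ?nnegrE ?powR_ge0.
Qed.

Lemma le_wpnorm x y : (forall i, `|x i| <= `|y i|) -> wpnorm p w x <= wpnorm p w y.
Proof.
move=> xy; apply: wpnorm_le; first exact: wpnorm_ge0.
rewrite [X in _ <= X]powR_wpnorm.
apply: ler_sum => i _.
by rewrite ler_wpM2l ?w_ge0 // ge0_ler_powR ?nnegrE ?(ltW p_gt0).
Qed.

Lemma eq_wpnorm x y : (forall i, `|x i| = `|y i|) -> wpnorm p w x = wpnorm p w y.
Proof.
by move=> xy; apply/le_anti/andP; split; apply: le_wpnorm => i; rewrite xy.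
Qed.

Lemma wpnorm_le_cst x (c : R) : \sum_i w i = 1 -> 0 <= c ->
  (forall i, `|x i| <= c) -> wpnorm p w x <= c.
Proof.
move=> w_sum1 c_ge0 xc; apply: wpnorm_le => //.
rewrite -[c `^ p]mul1r -w_sum1 mulr_suml; apply: ler_sum => i _.
by rewrite ler_wpM2l ?w_ge0 // ge0_ler_powR ?nnegrE ?(ltW p_gt0) ?xc.
Qed.

Lemma normr_le_wpnorm x i (wmin : R) : 0 < wmin -> wmin <= w i ->
  `|x i| <= wmin^-1 `^ p^-1 * wpnorm p w x.
Proof.
move=> wmin_gt0 wmin_le.
rewrite /wpnorm -powRM ?invr_ge0 ?(ltW wmin_gt0) // -[`|x i|]powRK //.
rewrite ge0_ler_powR ?nnegrE ?invp_ge0 ?powR_ge0 ?mulr_ge0 ?invr_ge0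
  ?(ltW wmin_gt0) //.
rewrite ler_pdivlMl // (le_trans (ler_wpM2r (powR_ge0 _ _) wmin_le)) //.
by rewrite (bigD1 i) //= lerDl sumr_ge0 // => j _; rewrite mulr_ge0 ?powR_ge0.
Qed.

Lemma wpnorm_eq0 {x} : wpnorm p w x = 0 -> forall i, x i = 0.
Proof.
move=> x0 i; have sum0 : \sum_i w i * `|x i| `^ p = 0.
  by rewrite -powR_wpnorm x0 powR0 // gt_eqF.
have term_ge0 j : true -> 0 <= w j * `|x j| `^ p by rewrite mulr_ge0 ?powR_ge0.
have /eqP := psumr_eq0P term_ge0 sum0 (i:=i) isT.
by rewrite mulf_eq0 gt_eqF //= => /eqP /powR_eq0_eq0 /normr0_eq0.
Qed.

Lemma wpnorm_normalized {x} : 0 < wpnorm p w x ->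
  \sum_i w i * (`|x i| / wpnorm p w x) `^ p = 1.
Proof.
move=> x_gt0; under eq_bigr do rewrite powRM ?invr_ge0 ?(ltW x_gt0) // mulrA mulrC.
rewrite -mulr_sumr -powR_wpnorm -powRM ?invr_ge0 ?wpnorm_ge0 ?(ltW x_gt0) //.
by rewrite mulVf ?gt_eqF // powR1.
Qed.

(* Minkowski's inequality comes from normalising [x] and [y] to norm 1 and
   using the convexity of [t `^ p] with weights [a / (a + b)], [b / (a + b)]. *)
Lemma powR_addr_le (u v a b : R) : 0 <= u -> 0 <= v -> 0 < a -> 0 < b ->
  (u + v) `^ p
  <= (a + b) `^ p * (a / (a + b) * (u / a) `^ p + b / (a + b) * (v / b) `^ p).
Proof.
move=> u_ge0 v_ge0 a_gt0 b_gt0; have ab_gt0 : 0 < a + b by rewrite addr_gt0.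
set t := a / (a + b).
have t_ge0 : 0 <= t by rewrite divr_ge0 ?(ltW a_gt0) ?(ltW ab_gt0).
have t_le1 : t <= 1 by rewrite ler_pdivrMr // mul1r lerDl (ltW b_gt0).
have -> : b / (a + b) = 1 - t by rewrite /t; field; exact: lt0r_neq0.
have -> : u + v = (a + b) * (t * (u / a) + (1 - t) * (v / b)).
  by rewrite /t; field; rewrite !lt0r_neq0.
have ua_ge0 : 0 <= u / a by rewrite divr_ge0 // (ltW a_gt0).
have vb_ge0 : 0 <= v / b by rewrite divr_ge0 // (ltW b_gt0).
have comb_ge0 : 0 <= t * (u / a) + (1 - t) * (v / b).
  by rewrite addr_ge0 // mulr_ge0 // subr_ge0.
rewrite powRM ?(ltW ab_gt0) // ler_wpM2l ?powR_ge0 //.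
by rewrite powR_convex_comb ?t_ge0 ?t_le1 ?(ltW p_gt1).
Qed.

Lemma wpnormD x y :
  wpnorm p w (fun i => x i + y i) <= wpnorm p w x + wpnorm p w y.
Proof.
set a := wpnorm p w x; set b := wpnorm p w y.
have [a0|a_neq0] := eqVneq a 0.
  by rewrite a0 add0r; apply: le_wpnorm => i; rewrite (wpnorm_eq0 a0 i) add0r.
have [b0|b_neq0] := eqVneq b 0.
  by rewrite b0 addr0; apply: le_wpnorm => i; rewrite (wpnorm_eq0 b0 i) addr0.
have a_gt0 : 0 < a by rewrite lt0r a_neq0 wpnorm_ge0.
have b_gt0 : 0 < b by rewrite lt0r b_neq0 wpnorm_ge0.
have x_normalized : \sum_i w i * (`|x i| / a) `^ p = 1 := wpnorm_normalized a_gt0.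
have y_normalized : \sum_i w i * (`|y i| / b) `^ p = 1 := wpnorm_normalized b_gt0.
apply: wpnorm_le; first by rewrite addr_ge0 ?wpnorm_ge0.
clearbody a b.
apply: (le_trans (y := \sum_i (a + b) `^ p *
    (a / (a + b) * (w i * (`|x i| / a) `^ p)
     + b / (a + b) * (w i * (`|y i| / b) `^ p)))).
  apply: ler_sum => i _.
  rewrite ![_ / _ * (w i * _)]mulrCA -mulrDr [X in _ <= X]mulrCA.
  rewrite ler_wpM2l ?w_ge0 //.
  apply: le_trans _ (powR_addr_le _ _ _ _ (normr_ge0 _) (normr_ge0 _) a_gt0 b_gt0).
  by rewrite ge0_ler_powR ?nnegrE ?(ltW p_gt0) ?addr_ge0 ?ler_normD.
rewrite -mulr_sumr big_split -!mulr_sumr /= x_normalized y_normalized.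
by rewrite !mulr1 -mulrDl divff ?mulr1 // lt0r_neq0 // addr_gt0.
Qed.

Lemma wpnorm_distC (x y : S * A -> R) :
  wpnorm p w (fun i => x i - y i) = wpnorm p w (fun i => y i - x i).
Proof. by apply: eq_wpnorm => // i; rewrite distrC. Qed.

Lemma wpnorm_dist_triangle (x y z : S * A -> R) :
  wpnorm p w (fun i => x i - z i)
  <= wpnorm p w (fun i => x i - y i) + wpnorm p w (fun i => y i - z i).
Proof.
have -> : (fun i => x i - z i) = (fun i => (x i - y i) + (y i - z i)).
  by apply/funext => i; rewrite addrA subrK.
exact: wpnormD.
Qed.

End WeightedNorm.

Lemma gamma_pw_ge (R : realType) (S A : finType) (w : S * A -> R)
    (gamma p wmin wmax : R) :
  0 <= gamma -> 0 < p -> 0 < wmin -> \sum_i w i = 1 -> (forall i, w i <= wmax) ->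
  gamma * wmin^-1 `^ p^-1 <= gamma_pw S A gamma p wmin wmax.
Proof.
move=> gamma_ge0 p_gt0 wmin_gt0 w_sum1 w_le.
have n_ge0 : 0 <= #|{: S * A}|%:R :> R by exact: ler0n.
have n_wmax : 1 <= #|{: S * A}|%:R * wmax.
  have : \sum_i w i <= \sum_(i : S * A) wmax by exact: ler_sum.
  by rewrite w_sum1 sumr_const mulr_natl.
have wmax_ge0 : 0 <= wmax by nra.
rewrite /gamma_pw -mulrA ler_wpM2l // -powRM ?divr_ge0 ?(ltW wmin_gt0) //.
rewrite ge0_ler_powR ?nnegrE ?invr_ge0 ?(ltW p_gt0) ?(ltW wmin_gt0) //.
  by rewrite mulr_ge0 ?divr_ge0 ?(ltW wmin_gt0).
by rewrite mulrA ler_pdivlMr // mulVf ?gt_eqF.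
Qed.

Lemma wpnorm_Fsoft_contract (R : realType) (S A : finType)
    (r : S -> A -> R) (P : S -> A -> S -> R) (gamma lambda p : R)
    (w : S * A -> R) (wmin wmax : R) (Q Q' : S * A -> R) :
  (forall s a s', 0 <= P s a s') -> (forall s a, \sum_(s' : S) P s a s' = 1) ->
  0 <= gamma -> 0 < lambda -> 1 < p ->
  (forall i, 0 < w i) -> \sum_i w i = 1 ->
  0 < wmin -> (forall i, wmin <= w i) -> (forall i, w i <= wmax) ->
  wpnorm p w (fun sa => Fsoft r P gamma lambda Q sa - Fsoft r P gamma lambda Q' sa)
  <= gamma_pw S A gamma p wmin wmax * wpnorm p w (fun sa => Q sa - Q' sa).
Proof.
move=> P_ge0 P_sum1 gamma_ge0 lambda_gt0 p_gt1 w_gt0 w_sum1 wmin_gt0 wmin_le w_le.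
have p_gt0 : 0 < p by exact: lt_trans p_gt1.
set M := wmin^-1 `^ p^-1 * wpnorm p w (fun sa => Q sa - Q' sa).
have M_ge0 : 0 <= M by rewrite mulr_ge0 ?powR_ge0 ?wpnorm_ge0.
apply: le_trans (_ : gamma * M <= _); last first.
  by rewrite mulrA ler_wpM2r ?wpnorm_ge0 //; exact: (@gamma_pw_ge _ _ _ w).
apply: wpnorm_le_cst => //; first exact: mulr_ge0.
by apply: Fsoft_lipschitz => // i; apply: normr_le_wpnorm.
Qed.

Lemma ler_fp (R : realType) (S A : finType) (r : S -> A -> R)
    (P : S -> A -> S -> R) (gamma lambda p : R) (w : S * A -> R) (d : nat)
    (Phi : 'M[R]_(#|{: S * A}|, d)) (theta theta' : 'cV[R]_d) :
  0 < p ->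
  (fp r P gamma lambda p w Phi theta <= fp r P gamma lambda p w Phi theta')
  = (wpnorm p w (fun sa => Fsoft r P gamma lambda (Qlin Phi theta) sa
                           - Qlin Phi theta sa)
     <= wpnorm p w (fun sa => Fsoft r P gamma lambda (Qlin Phi theta') sa
                              - Qlin Phi theta' sa)).
Proof.
move=> p_gt0; rewrite /fp ler_pM2l ?invr_gt0 //.
by rewrite (le_mono_in (gt0_ltr_powR p_gt0)) // nnegrE wpnorm_ge0.
Qed.

Section ResidualBound.
Variables (R : realFieldType) (T : Type) (d : T -> T -> R) (F : T -> T).
Variables (g : R) (x_fix : T).
Hypothesis d_sym : forall x y, d x y = d y x.
Hypothesis d_triangle : forall x y z, d x z <= d x y + d y z.
Hypothesis F_contract : forall x y, d (F x) (F y) <= g * d x y.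
Hypothesis F_fix : F x_fix = x_fix.

Lemma dist_fix_le_residual x : (1 - g) * d x_fix x <= d (F x) x.
Proof.
have := d_triangle (F x_fix) (F x) x; have := F_contract x_fix x.
rewrite F_fix; lra.
Qed.

Lemma residual_le_dist_fix x : d (F x) x <= (1 + g) * d x x_fix.
Proof.
have := d_triangle (F x) (F x_fix) x; have := F_contract x x_fix.
rewrite F_fix (d_sym x_fix x); lra.
Qed.

Hypothesis g_lt1 : g < 1.

Lemma dist_le_of_residual_le x y : d (F y) y <= d (F x) x ->
  d x y <= (1 + (1 + g) / (1 - g)) * d x x_fix.
Proof.
move=> residual_le; have g1_gt0 : 0 < 1 - g by rewrite subr_gt0.
rewrite mulrDl mul1r (le_trans (d_triangle x x_fix y)) // lerD2l.
rewrite mulrAC ler_pdivlMr // mulrC (le_trans (dist_fix_le_residual y)) //.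
exact: le_trans residual_le (residual_le_dist_fix x).
Qed.

End ResidualBound.

Theorem theorem2 (R : realType) (S A : finType) (d : nat)
  (r : S -> A -> R) (P : S -> A -> S -> R) (gamma lambda p : R)
  (w : S * A -> R) (wmin wmax : R)
  (Phi : 'M[R]_(#|{: S * A}|, d))
  (Qstar : S * A -> R) (thetabar thetap : 'cV[R]_d) :
  (* finite MDP *)
  (forall s a s', 0 <= P s a s') ->
  (forall s a, \sum_(s' : S) P s a s' = 1) ->
  0 <= gamma -> gamma < 1 -> 0 < lambda ->
  (* weights *)
  (forall i, 0 < w i) -> \sum_i w i = 1 ->
  (forall i, wmin <= w i) -> (exists i, w i = wmin) ->
  (forall i, w i <= wmax) -> (exists i, w i = wmax) ->
  (* full-rank features *)
  \rank Phi = d ->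
  (* p in (1, oo) with gamma_{p,w} < 1 *)
  1 < p -> gamma_pw S A gamma p wmin wmax < 1 ->
  (* Q*_lambda is the fixed point of F_lambda *)
  Fsoft r P gamma lambda Qstar = Qstar ->
  (* thetabar minimises ||Q_theta - Q*||_{p,w} *)
  (forall theta, wpnorm p w (fun sa => Qlin Phi thetabar sa - Qstar sa)
                 <= wpnorm p w (fun sa => Qlin Phi theta sa - Qstar sa)) ->
  (* thetap minimises f_p *)
  (forall theta, fp r P gamma lambda p w Phi thetap
                 <= fp r P gamma lambda p w Phi theta) ->
  wpnorm p w (fun sa => Qlin Phi thetabar sa - Qlin Phi thetap sa)
  <= (1 + (1 + gamma_pw S A gamma p wmin wmax)
            / (1 - gamma_pw S A gamma p wmin wmax))
     * wpnorm p w (fun sa => Qlin Phi thetabar sa - Qstar sa).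
Proof.
move=> P_ge0 P_sum1 gamma_ge0 _ lambda_gt0 w_gt0 w_sum1 wmin_le [i0 wmin_eq]
  w_le _ _ p_gt1 gamma_pw_lt1 Qstar_fix _ thetap_min.
have wmin_gt0 : 0 < wmin by rewrite -wmin_eq.
apply: (@dist_le_of_residual_le R (S * A -> R)
  (fun Q Q' => wpnorm p w (fun sa => Q sa - Q' sa)) (Fsoft r P gamma lambda)
  (gamma_pw S A gamma p wmin wmax) Qstar).
- by move=> Q Q'; apply: wpnorm_distC.
- by move=> Q Q' Q''; apply: wpnorm_dist_triangle.
- by move=> Q Q'; apply: wpnorm_Fsoft_contract.
- exact: Qstar_fix.
- exact: gamma_pw_lt1.
- by rewrite -ler_fp ?thetap_min // (lt_trans ltr01 p_gt1).
Qed.
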